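(* Let $a\in[0,\infty)$ and let $t:[0,1]\to[0,\infty]$ and $s:[0,\infty]\to[0,1]$ be continuous and increasing functions such that (1) $t(x)=\frac{a}{2}$ if and only if $x=0$, and (2) the function $G_{t,s}:[0,1]^2\to[0,1]$, $G_{t,s}(x,y)=s(t(x)+t(y))$, is a grouping function. Then $s(x)=0$ if and only if $x\in[0,a]$.
   Context: ''Increasing'' means non-decreasing. Arithmetic in $[0,\infty]$ uses $c+\infty=\infty$; continuity on $[0,\infty]$ refers to the usual topology of the extended half-line. A grouping function is a map $G:[0,1]^2\to[0,1]$ that is (G1) commutative, (G2) $G(x,y)=0$ iff $x=y=0$, (G3) $G(x,y)=1$ iff $x=1$ or $y=1$, (G4) increasing in each variable, (G5) continuous. *)

From HB Require Import structures.
From mathcomp Require Import all_boot all_order all_algebra.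
From mathcomp Require Import all_classical all_reals.
From mathcomp Require Import topology normedtype ereal.
Unset Printing Implicit Defensive.
Import Order.TTheory GRing.Theory Num.Theory.
Import numFieldNormedType.Exports.
Local Open Scope classical_set_scope.
Local Open Scope ring_scope.

Definition unitI (R : realType) : set R := [set x : R | 0 <= x <= 1].

Definition extHalf (R : realType) : set (\bar R) := [set x : \bar R | (0 <= x)%E].

(* Grouping function G : [0,1]^2 -> [0,1], represented as a map R -> R -> R
   whose behaviour is only constrained on [0,1]^2. *)
Definition grouping_function (R : realType) (G : R -> R -> R) : Prop :=
  (forall x y, x \in unitI R -> y \in unitI R -> G x y \in unitI R) /\
  (forall x y, x \in unitI R -> y \in unitI R -> G x y = G y x) /\
  (* (G2) *)
  (forall x y, x \in unitI R -> y \in unitI R -> (G x y = 0 <-> x = 0 /\ y = 0)) /\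
  (forall x y, x \in unitI R -> y \in unitI R -> (G x y = 1 <-> x = 1 \/ y = 1)) /\
  (forall x x' y, x \in unitI R -> x' \in unitI R -> y \in unitI R ->
     x <= x' -> G x y <= G x' y) /\
  (forall x y y', x \in unitI R -> y \in unitI R -> y' \in unitI R ->
     y <= y' -> G x y <= G x y') /\
  {within unitI R `*` unitI R, continuous (fun p : R * R => G p.1 p.2)}.

(** If [s] vanished at some [x > a], continuity of [t] at [0] would give
    [y > 0] with [t y + t 0 <= x], hence [G (y, 0) = s (t y + t 0) = 0] by
    monotonicity of [s], contradicting (G2).  Conversely [s a = G (0, 0) = 0]
    and [s] is increasing and nonnegative.  Only (G2), monotonicity of [s] and
    continuity of [t] at [0] are used. *)

From HB Require Import structures.
From mathcomp Require Import all_boot all_order all_algebra.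
From mathcomp Require Import all_classical all_reals.
From mathcomp Require Import topology normedtype ereal.
Import Order.TTheory GRing.Theory Num.Theory.
Import numFieldNormedType.Exports.
Local Open Scope classical_set_scope.
Local Open Scope ring_scope.

Lemma in_unitI (R : realType) (x : R) : (x \in unitI R) = (0 <= x <= 1).
Proof. by apply/idP/idP; rewrite inE. Qed.

Lemma mem_unitI0 (R : realType) : (0 : R) \in unitI R.
Proof. by rewrite in_unitI lexx ler01. Qed.

Lemma in_extHalf (R : realType) (x : \bar R) : (x \in extHalf R) = (0 <= x)%E.
Proof. by apply/idP/idP; rewrite inE. Qed.

Lemma continuous_unitI_lt_right0 (R : realType) (t : R -> \bar R) (b : \bar R) :
  {within unitI R, continuous t} -> (t 0%R < b)%E ->
  exists2 y, 0 < y <= 1 & (t y < b)%E.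
Proof.
move=> tc t0b.
have : within (unitI R) (nbhs 0) (t @^-1` [set u | (u < b)%E]).
  rewrite (nbhs_subspace_in (set_mem (mem_unitI0 R))).
  by apply: tc; exact: open_ereal_lt_ereal.
move=> /nbhs_ballP[e /= e0 tlt].
pose y := Num.min (e / 2) 1.
have y0 : 0 < y by rewrite lt_min divr_gt0 ?ltr01.
have y1 : y <= 1 by rewrite ge_min lexx orbT.
exists y; first by rewrite y0 y1.
apply: tlt; last by rewrite /unitI /= (ltW y0) y1.
rewrite /ball /= sub0r normrN gtr0_norm // gt_min.
by rewrite ltr_pdivrMr // ltr_pMr // ltr1n.
Qed.

Section additive_generator.
Variables (R : realType) (t : R -> \bar R) (s : \bar R -> R).
Hypotheses (t_cont : {within unitI R, continuous t})
  (t_ge0 : forall x, x \in unitI R -> t x \in extHalf R)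
  (s_ge0 : forall x, x \in extHalf R -> 0 <= s x)
  (s_mono : forall x y, x \in extHalf R -> y \in extHalf R ->
     (x <= y)%E -> s x <= s y)
  (t0_fin : t 0%R \is a fin_num)
  (s_t00 : s (t 0%R + t 0%R)%E = 0)
  (s_neq0 : forall y, y \in unitI R -> y != 0 -> s (t y + t 0%R)%E != 0).

Lemma additive_generator_eq0 (x : \bar R) : x \in extHalf R ->
  s x = 0 <-> (x <= t 0%R + t 0%R)%E.
Proof.
have tD_ge0 y : y \in unitI R -> (t y + t 0%R)%E \in extHalf R.
  by move=> yI; rewrite in_extHalf adde_ge0 -?in_extHalf ?t_ge0 ?mem_unitI0.
move=> xI; split => [sx0|x_le]; last first.
  by apply/eqP; rewrite eq_le s_ge0 // andbT -s_t00 s_mono ?tD_ge0 ?mem_unitI0.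
rewrite leNgt; apply/negP => x_gt.
have [|y /andP[y0 y1] ty_lt] :=
  @continuous_unitI_lt_right0 _ _ (x - t 0%R) t_cont; first by rewrite lteBrDr.
have yI : y \in unitI R by rewrite in_unitI (ltW y0) y1.
apply/negP: (s_neq0 _ yI (lt0r_neq0 y0)).
rewrite negbK eq_le s_ge0 ?tD_ge0 // andbT.
by rewrite -[X in _ <= X]sx0 s_mono ?tD_ge0 // ltW // -lteBrDr.
Qed.

End additive_generator.

Theorem proposition6p2 (R : realType) (a : R) (t : R -> \bar R) (s : \bar R -> R) :
  0 <= a ->
  (* t : [0,1] -> [0,oo], continuous and increasing *)
  (forall x, x \in unitI R -> t x \in extHalf R) ->
  {within unitI R, continuous t} ->
  (forall x y, x \in unitI R -> y \in unitI R -> x <= y -> (t x <= t y)%E) ->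
  (* s : [0,oo] -> [0,1], continuous and increasing *)
  (forall x, x \in extHalf R -> s x \in unitI R) ->
  {within extHalf R, continuous s} ->
  (forall x y, x \in extHalf R -> y \in extHalf R -> (x <= y)%E -> s x <= s y) ->
  (* (1) *)
  (forall x, x \in unitI R -> (t x = (a / 2)%:E <-> x = 0)) ->
  (* (2) *)
  grouping_function R (fun x y => s (t x + t y)%E) ->
  forall x, x \in extHalf R -> (s x = 0 <-> (0 <= x <= a%:E)%E).
Proof.
move=> _ t_ge0 t_cont _ sI _ s_mono t_a2 [_ [_ [G2 _]]] x xI.
have unitI0 := mem_unitI0 R.
have t0 : t 0%R = (a / 2)%:E by apply/t_a2.
have t00 : (t 0%R + t 0%R)%E = a%:E by rewrite t0 -EFinD -splitr.
have s_ge0 z : z \in extHalf R -> 0 <= s z.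
  by move/sI; rewrite in_unitI => /andP[].
have t0_fin : t 0%R \is a fin_num by rewrite t0.
have s_t00 : s (t 0%R + t 0%R)%E = 0 by apply/(G2 _ _ unitI0 unitI0).
have s_neq0 y : y \in unitI R -> y != 0 -> s (t y + t 0%R)%E != 0.
  by move=> yI /eqP y_neq0; apply/eqP => /(G2 _ _ yI unitI0)[].
rewrite (@additive_generator_eq0 _ _ _
  t_cont t_ge0 s_ge0 s_mono t0_fin s_t00 s_neq0 _ xI).
by rewrite t00 -in_extHalf xI; exact: iff_refl.
Qed.
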